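(* For all positive integers $n,k$, $$WS^+(n+k) \geq S^+(k+1)\,WS^+(n).$$
   Context: A set $A \subseteq \mathbb{N}$ is sum-free if for all $(a,b)\in A^2$ (allowing $a=b$), $a+b \notin A$; it is weakly sum-free if for all $(a,b)\in A^2$ with $a\neq b$, $a+b\notin A$. An S-template with $m$ colors and width $p$ is a partition of $\{1,\dots,p\}$ into $m$ sum-free subsets $A_1,\dots,A_m$ such that for every $i\in\{1,\dots,m-1\}$ and all $(x,y)\in A_i^2$, $x+y>p$ implies $x+y-p\notin A_i$; $S^+(m)$ is the greatest width of an S-template with $m$ colors. For positive integers $a>b$, let $\pi(x) = (x \bmod a) + a\cdot \mathbb{1}_{\{0,\dots,b\}}(x \bmod a)$. For positive integers $a,m,b$ with $a>b$, a partition $(A_1,\dots,A_m)$ of $\{1,\dots,a+b\}$ is a $b$-WS-template with width $a$ and $m$ colors if: (i) every $A_i$ is weakly sum-free; (ii) every $A_i\setminus\{1,\dots,b\}$ is sum-free; (iii) for all $(x,y)\in A_m^2$, $x+y>b+2a$ implies $x+y-2a\notin A_m$; (iv) for all $i\in\{1,\dots,m-1\}$ and $(x,y)\in A_i^2$, $x+y>a+b$ implies $\pi(x+y)\notin A_i$. $WS^+_b(m)$ is the largest $a$ such that a $b$-WS-template with width $a$ and $m$ colors exists ($0$ if none), and $WS^+(m)=\max_{b\in\mathbb{N}^*} WS^+_b(m)$. *)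

From mathcomp Require Import all_boot.
From Stdlib Require Import ClassicalEpsilon.
Set Implicit Arguments. Unset Strict Implicit. Unset Printing Implicit Defensive.

(* A partition (A_1,...,A_m) of {1,...,N} is represented by a colouring
   f : nat -> nat with 1 <= f x <= m for x in {1..N}; A_i = {x in [1,N] | f x = i}. *)
Definition is_coloring (m N : nat) (f : nat -> nat) : Prop :=
  forall x, 1 <= x <= N -> 1 <= f x <= m.

Definition S_template (m p : nat) (f : nat -> nat) : Prop :=
  [/\ is_coloring m p f,
      (forall x y, 1 <= x <= p -> 1 <= y <= p -> f x = f y -> x + y <= p ->
         f (x + y) <> f x)
    &
      (forall x y, 1 <= x <= p -> 1 <= y <= p -> f x = f y -> f x < m ->
         p < x + y -> f (x + y - p) <> f x)].

Definition piab (a b x : nat) : nat := x %% a + (if x %% a <= b then a else 0).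

Definition WS_template (b m a : nat) (f : nat -> nat) : Prop :=
  [/\ 0 < a, 0 < b, 0 < m, b < a & is_coloring m (a + b) f] /\
  [/\
      (forall x y, 1 <= x <= a + b -> 1 <= y <= a + b -> x <> y -> f x = f y ->
         x + y <= a + b -> f (x + y) <> f x),
      (forall x y, b < x <= a + b -> b < y <= a + b -> f x = f y ->
         x + y <= a + b -> f (x + y) <> f x),
      (forall x y, 1 <= x <= a + b -> 1 <= y <= a + b -> f x = m -> f y = m ->
         b + 2 * a < x + y -> f (x + y - 2 * a) <> m)
    &
      (forall x y, 1 <= x <= a + b -> 1 <= y <= a + b -> f x = f y -> f x < m ->
         a + b < x + y -> f (piab a b (x + y)) <> f x)].

(* The greatest natural number satisfying P, or 0 if there is none
   (classical definition). *)
Definition greatest (P : nat -> Prop) : nat :=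
  match excluded_middle_informative (exists s, P s /\ forall q, P q -> q <= s) with
  | left H => proj1_sig (constructive_indefinite_description _ H)
  | right _ => 0
  end.

Definition S_plus (m : nat) : nat := greatest (fun p => exists f, S_template m p f).

Definition WS_plus_b (b m : nat) : nat :=
  greatest (fun a => exists f, WS_template b m a f).

Definition WS_plus (m : nat) : nat :=
  greatest (fun v => exists2 b, 0 < b & v = WS_plus_b b m).

From mathcomp Require Import all_boot zify.
From Stdlib Require Import ClassicalEpsilon.

Set Implicit Arguments.
Unset Strict Implicit.
Unset Printing Implicit Defensive.

(* Write z in {1..pa+b} as z = a q + r with r in {1..a+b}, taking r = z when
   z <= b and r in (b, a+b] otherwise.  Given a b-WS-template g of width a with
   n colours and an S-template f of width p with k+1 colours, colour z by g r if
   g r < n, and by n - 1 + f (q + 1) otherwise.  If x, y and x + y (or the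
   reduced sums of conditions (iii) and (iv)) share a colour, the conditions on
   g force the residues into the last class of g with a carry of exactly one
   block of width a, so the block indices q + 1 violate the matching condition
   on f.  This yields a b-WS-template of width p a with n + k colours.  Weakly
   sum-free colourings of {1..N} with m colours have N bounded (a Schur-type
   pigeonhole argument), so all the maxima in the statement are attained. *)

Lemma greatest_ge (P : nat -> Prop) B q :
  P q -> (forall q, P q -> q <= B) -> q <= greatest P.
Proof.
move=> Pq ubP.
pose Pb q := if excluded_middle_informative (P q) then true else false.
have PbP q' : reflect (P q') (Pb q').
  by rewrite /Pb; case: excluded_middle_informative => ?; constructor.
have exPb : exists q, Pb q by exists q; apply/PbP.
have ubPb q' : Pb q' -> q' <= B by move/PbP/ubP.
case: (ex_maxnP exPb ubPb) => s /PbP Ps maxs.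
rewrite /greatest; case: excluded_middle_informative => [H|[]].
  by case: (constructive_indefinite_description _ H) => t [_ +] /=; apply.
by exists s; split=> // q' /PbP/maxs.
Qed.

Lemma greatest_holds (P : nat -> Prop) : 0 < greatest P -> P (greatest P).
Proof.
rewrite /greatest; case: excluded_middle_informative => // H _.
by case: (constructive_indefinite_description _ H) => t [].
Qed.

Lemma pigeonhole_count (T : eqType) (col : T -> nat) m r (W : seq T) :
  {in W, forall u, 1 <= col u <= m} -> m * r < size W ->
  exists2 c, 1 <= c <= m & r < count (fun u => col u == c) W.
Proof.
elim: m W => [|m IH] W colW szW.
  case: W colW szW => [|u W] // /(_ u (mem_head _ _)); lia.
have [le_r|gt_r] := leqP (count (fun u => col u == m.+1) W) r; last by exists m.+1; rewrite ?leqnn.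
set W' := [seq u <- W | col u != m.+1].
have colW' : {in W', forall u, 1 <= col u <= m}.
  by move=> u; rewrite mem_filter => /andP[/eqP ne_u /colW]; lia.
have szW' : m * r < size W'.
  have := count_predC (fun u => col u == m.+1) W.
  rewrite size_filter mulSn in szW * => szW_split.
  have : count (predC (fun u => col u == m.+1)) W = count (fun u => col u != m.+1) W.
    exact: eq_count.
  lia.
have [c c_range lt_r] := IH W' colW' szW'.
exists c; first lia.
by apply: leq_trans lt_r _; rewrite count_filter; apply: sub_count => u /andP[].
Qed.

Definition weakly_sum_free (N : nat) (col : nat -> nat) : Prop :=
  forall x y, 1 <= x <= N -> 1 <= y <= N -> x <> y -> col x = col y ->
    x + y <= N -> col (x + y) <> col x.

Fixpoint wschur_bound (m j : nat) : nat :=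
  if j is j'.+1 then m * wschur_bound m j' + 1 else 1.

Section WeakSchurBound.

Variables (m N : nat) (col : nat -> nat).
Hypotheses (col_range : is_coloring m N col) (col_wsf : weakly_sum_free N col).

Definition anchored_at (w c : nat) (V : seq nat) : Prop :=
  {in V, forall u, w < u /\ col (u - w) = c}.

Lemma anchored_step v V h :
  sorted ltn (v :: V) -> {in v :: V, forall u, u <= N} -> m * h < size V ->
  exists2 c, 1 <= c <= m &
    anchored_at v c [seq u <- V | col (u - v) == c] /\
    h < size [seq u <- V | col (u - v) == c].
Proof.
rewrite /= path_sortedE; last exact: ltn_trans.
move=> /andP[/allP gt_v _] le_N szV.
have col_range_V : {in V, forall u, 1 <= col (u - v) <= m}.
  move=> u uV; apply: col_range; have := gt_v u uV.
  by have := le_N u; rewrite inE uV orbT => /(_ isT); lia.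
have [c c_range lt_h] := pigeonhole_count col_range_V szV.
exists c => //; split; last by rewrite size_filter.
by move=> u; rewrite mem_filter => /andP[/eqP <- /gt_v].
Qed.

(* Two anchors w < v for the same colour give x = v - w and y = u - v with
   x + y = u - w all of colour c; choosing u with x <> y contradicts weak sum-freeness. *)
Lemma anchored_twice w v c V V' :
  {in V, forall u, u <= N} -> anchored_at w c V -> v \in V ->
  {subset V' <= V} -> sorted ltn V' -> 1 < size V' -> anchored_at v c V' -> False.
Proof.
move=> le_N anc_w vV sub_V' + + anc_v.
case: V' sub_V' anc_v => [|u1 [|u2 V']] // sub_V' anc_v /andP[lt_u12 _] _.
have [lt_wv col_vw] := anc_w v vV.
have [u uV' ne_u] : exists2 u, u \in [:: u1, u2 & V'] & u - v <> v - w.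
  case: (eqVneq (u1 - v) (v - w)) => [eq1|]; last by exists u1; [rewrite mem_head|apply/eqP].
  exists u2; first by rewrite !inE eqxx orbT.
  have [lt_v1 _] := anc_v u1 (mem_head _ _); lia.
have [lt_vu col_uv] := anc_v u uV'.
have [lt_wu col_uw] := anc_w u (sub_V' u uV').
have u_le := le_N u (sub_V' u uV').
apply: (col_wsf (x := v - w) (y := u - v)); try lia.
by rewrite (_ : v - w + (u - v) = u - w); lia.
Qed.

Lemma wschur_bound_gt0 j : 0 < wschur_bound m j.
Proof. by case: j => //= j; rewrite addn1. Qed.

Definition anchored_family (U V : seq nat) : Prop :=
  [/\ uniq U, {in U, forall c, 1 <= c <= m}, sorted ltn V, {in V, forall u, u <= N}
     & {in U, forall c, exists w, anchored_at w c V}].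

Lemma anchored_family_size U V : anchored_family U V -> size U <= m.
Proof.
case=> uniqU U_range _ _ _; rewrite -(size_iota 1 m).
by apply: uniq_leq_size => // c /U_range; rewrite mem_iota; lia.
Qed.

Lemma anchored_extend h (U V : seq nat) :
  0 < h -> anchored_family U V -> m * h + 1 < size V ->
  exists2 c, c \notin U & exists2 V', anchored_family (c :: U) V' & h < size V'.
Proof.
case: V => [//|v V] h_gt0 [uniqU U_range sortV le_N ancU] szV.
have [|c c_range [anc_v szV']] := @anchored_step v V h sortV le_N; first by move: szV => /=; lia.
set V' := [seq u <- V | _] in anc_v szV'.
have subV' : {subset V' <= v :: V}.
  by move=> u; rewrite mem_filter inE => /andP[_ ->]; rewrite orbT.
have sortV' : sorted ltn V' by apply/sorted_filter/(path_sorted sortV); exact: ltn_trans.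
have [cU|cNU] := boolP (c \in U).
  have [w anc_w] := ancU c cU.
  exfalso; apply: (anchored_twice le_N anc_w (mem_head v V) subV' sortV' _ anc_v).
  exact: leq_ltn_trans h_gt0 szV'.
exists c => //; exists V' => //; split=> //=.
- by rewrite cNU uniqU.
- by move=> c'; rewrite inE => /predU1P[->|/U_range].
- by move=> u /subV'/le_N.
move=> c'; rewrite inE => /predU1P[->|/ancU[w anc_w]]; first by exists v.
by exists w => u /subV'; apply: anc_w.
Qed.

Lemma anchored_chain j (U V : seq nat) :
  anchored_family U V -> m <= size U + j -> m * wschur_bound m j + 1 < size V -> False.
Proof.
elim: j U V => [|j IH] U V famUV szU szV;
  have [c cNU [V' famV' szV']] := anchored_extend (wschur_bound_gt0 _) famUV szV.
  by have := anchored_family_size famV'; rewrite /=; lia.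
by apply: (IH (c :: U) V') => //=; lia.
Qed.

Lemma weakly_sum_free_bound : N <= m * wschur_bound m m.
Proof.
rewrite leqNgt; apply/negP => ltN.
apply: (@anchored_chain m [::] (iota 0 N.+1)) => //; last by rewrite size_iota; lia.
split=> //; first exact: iota_ltn_sorted.
by move=> u; rewrite mem_iota; lia.
Qed.

End WeakSchurBound.

Section ShiftedDivision.

Variables a b : nat.
Hypothesis b_lt_a : b < a.

Lemma piab_addMl q w : piab a b (a * q + w) = piab a b w.
Proof. by rewrite /piab mulnC modnMDl. Qed.

Lemma piab_range w : b < piab a b w <= a + b.
Proof.
have := ltn_pmod w (leq_ltn_trans (leq0n b) b_lt_a).
by rewrite /piab; case: (leqP (w %% a) b); lia.
Qed.

Lemma piab_id r : b < r <= a + b -> piab a b r = r.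
Proof.
move=> r_range; have [lt_ra|le_ar] := ltnP r a.
  by rewrite /piab modn_small // leqNgt (proj1 (andP r_range)) addn0.
have := piab_addMl 1 (r - a); rewrite muln1 subnKC // => ->.
rewrite /piab modn_small; last by lia.
by case: leqP; lia.
Qed.

Lemma piab_divn_eq w : b < w -> exists t, w = a * t + piab a b w.
Proof.
move=> lt_bw; rewrite /piab; have := divn_eq w a; rewrite mulnC.
case: (w %/ a) => [|q]; case: leqP => le_mod w_eq.
- lia.
- by exists 0; lia.
- by exists q; rewrite mulnS in w_eq; lia.
- by exists q.+1; lia.
Qed.

Lemma piab_uniq q1 r1 q2 r2 : a * q1 + r1 = a * q2 + r2 ->
  b < r1 <= a + b -> b < r2 <= a + b -> q1 = q2 /\ r1 = r2.
Proof.
move=> eq12 r1_range r2_range.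
have eq_r : r1 = r2.
  by rewrite -(piab_id r1_range) -(piab_id r2_range) -(piab_addMl q1) eq12 piab_addMl.
split=> //; apply/eqP; rewrite -(eqn_pmul2l (leq_ltn_trans (leq0n b) b_lt_a)).
by apply/eqP; lia.
Qed.

Definition bmod z := if z <= b then z else piab a b z.
Definition bdiv z := (z - bmod z) %/ a.

Lemma bmod_small z : z <= b -> bmod z = z.
Proof. by rewrite /bmod => ->. Qed.

Lemma bdiv_small z : z <= b -> bdiv z = 0.
Proof. by move=> le_zb; rewrite /bdiv bmod_small // subnn div0n. Qed.

Lemma bmod_divn_eq z : z = a * bdiv z + bmod z.
Proof.
have [le_zb|lt_bz] := leqP z b; first by rewrite bdiv_small ?bmod_small // muln0.
have [t z_eq] := piab_divn_eq lt_bz.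
have bmod_z : bmod z = piab a b z by rewrite /bmod leqNgt lt_bz.
rewrite /bdiv bmod_z (_ : z - _ = a * t) ?mulKn //; lia.
Qed.

Lemma bmod_range z : 0 < z -> 0 < bmod z <= a + b.
Proof.
rewrite /bmod; case: (leqP z b) => [le_zb|_] z_gt0; first lia.
by have := piab_range z; lia.
Qed.

Lemma bmod_gtb z : (b < bmod z) = (b < z).
Proof.
rewrite /bmod; case: (leqP z b) => [le_zb|_]; first by apply/negbTE; rewrite -leqNgt.
by have /andP[-> _] := piab_range z.
Qed.

Lemma bdiv_lt p z : 0 < p -> z <= p * a + b -> bdiv z < p.
Proof.
move=> p_gt0 z_le; have [le_zb|lt_bz] := leqP z b; first by rewrite bdiv_small.
have := bmod_divn_eq z; have := bmod_gtb z; rewrite lt_bz => lt_b_mod z_eq.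
by rewrite -(ltn_pmul2l (leq_ltn_trans (leq0n b) b_lt_a)); lia.
Qed.

Lemma bmod_spec z : 0 < z ->
  [/\ z = a * bdiv z + bmod z, 0 < bmod z <= a + b & (b < bmod z) = (b < z)].
Proof. by move=> z_gt0; rewrite -bmod_divn_eq bmod_range // bmod_gtb. Qed.

End ShiftedDivision.

Lemma WS_template_residue_sum b n a g r1 r2 :
  WS_template b n a g -> 0 < r1 <= a + b -> 0 < r2 <= a + b -> b < r1 + r2 ->
  r1 <> r2 \/ b < r1 -> g r1 = g r2 -> g (piab a b (r1 + r2)) = g r1 ->
  g r1 = n /\ a + b < r1 + r2 <= 2 * a + b.
Proof.
case=> [[_ _ _ b_lt_a col_g] [g_i g_ii g_iii g_iv]] r1_range r2_range.
move=> lt_b_sum ne_r12 g_r12 g_sum.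
have [le_sum|lt_sum] := leqP (r1 + r2) (a + b).
  exfalso; rewrite (piab_id b_lt_a) in g_sum; last by lia.
  have [eq_r12|/eqP ne] := eqVneq r1 r2; last by apply: (g_i r1 r2) => //; lia.
  by case: ne_r12 => [//|lt_b1]; apply: (g_ii r1 r2) => //; lia.
have g_r1_n : g r1 = n.
  have [lt_gn|ge_gn] := ltnP (g r1) n; last by have := col_g r1 r1_range; lia.
  by exfalso; apply: (g_iv r1 r2) => //; lia.
split=> //=; rewrite leqNgt; apply/negP => lt_2ab.
have sum_eq : r1 + r2 = a * 2 + (r1 + r2 - 2 * a) by lia.
rewrite sum_eq piab_addMl (piab_id b_lt_a) in g_sum; last by lia.
by apply: (g_iii r1 r2) => //; lia.
Qed.

Lemma WS_template_carry b n a g X Y Z d :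
  WS_template b n a g -> 0 < X -> 0 < Y -> 0 < Z -> X + Y = Z + a * d ->
  (Z <= b -> d = 0) -> X <> Y \/ b < X /\ b < Y ->
  g (bmod a b X) = g (bmod a b Y) -> g (bmod a b Z) = g (bmod a b X) ->
  g (bmod a b X) = n /\ bdiv a b Z + d = (bdiv a b X + bdiv a b Y).+1.
Proof.
move=> gWS X_gt0 Y_gt0 Z_gt0 sum_eq d0 ne_XY g_XY g_ZX.
have [[_ _ _ b_lt_a _] [g_i _ _ _]] := gWS.
have [X_eq X_range gtb_X] := bmod_spec b_lt_a X_gt0.
have [Y_eq Y_range gtb_Y] := bmod_spec b_lt_a Y_gt0.
have [Z_eq Z_range gtb_Z] := bmod_spec b_lt_a Z_gt0.
set rX := bmod a b X in X_eq X_range gtb_X g_XY g_ZX *.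
set rY := bmod a b Y in Y_eq Y_range gtb_Y g_XY *.
set rZ := bmod a b Z in Z_eq Z_range gtb_Z g_ZX.
have lt_bZ : b < Z.
  rewrite ltnNge; apply/negP => le_Zb; move: sum_eq; rewrite d0 // muln0 addn0 => sum_eq.
  have le_Xb : X <= b by lia.
  have le_Yb : Y <= b by lia.
  rewrite /rX /rY /rZ !bmod_small // in g_XY g_ZX; rewrite -sum_eq in g_ZX.
  by case: ne_XY => [ne|]; [apply: (g_i X Y) => //; lia | lia].
have lt_b_sum : b < rX + rY.
  rewrite ltnNge; apply/negP => le_sum.
  have [le_Xb le_Yb] : X <= b /\ Y <= b by lia.
  by move: le_sum; rewrite /rX /rY !bmod_small //; lia.
have ne_r : rX <> rY \/ b < rX.
  case: ne_XY => [ne|[lt_bX _]]; last by right; rewrite gtb_X.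
  have [le_Xb|lt_bX] := leqP X b; last by right; rewrite gtb_X.
  left => eq_r; have le_Yb : Y <= b by lia.
  by apply: ne; move: eq_r; rewrite /rX /rY !bmod_small.
have g_sum : g (piab a b (rX + rY)) = g rX.
  have arg_eq : a * (bdiv a b Z + d) + rZ = a * (bdiv a b X + bdiv a b Y) + (rX + rY).
    by lia.
  rewrite -g_ZX -(piab_id b_lt_a (r := rZ)); last by lia.
  by rewrite -[in RHS](piab_addMl _ _ (bdiv a b Z + d)) arg_eq piab_addMl.
have [g_n sum_range] := WS_template_residue_sum gWS X_range Y_range lt_b_sum ne_r g_XY g_sum.
split; first exact: g_n.
apply: (proj1 (piab_uniq b_lt_a (r1 := rZ) (r2 := rX + rY - a) _ _ _)); lia.
Qed.

Definition product_coloring (a b n : nat) (g f : nat -> nat) (z : nat) : nat :=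
  if g (bmod a b z) < n then g (bmod a b z) else n.-1 + f (bdiv a b z).+1.

Section ProductTemplate.

Variables (a b n k p : nat) (g f : nat -> nat).
Hypotheses (gWS : WS_template b n a g) (fS : S_template (k + 1) p f) (p_gt0 : 0 < p).

Local Notation F := (product_coloring a b n g f).

Lemma product_coloring_parts z : 0 < z <= p * a + b ->
  [/\ 0 < g (bmod a b z) <= n, 0 < f (bdiv a b z).+1 <= k + 1 & bdiv a b z < p].
Proof.
have [[_ _ _ b_lt_a col_g] _] := gWS; have [col_f _ _] := fS.
move=> /andP[z_gt0 z_le]; have lt_p := bdiv_lt b_lt_a p_gt0 z_le.
have [_ z_range _] := bmod_spec b_lt_a z_gt0.
by rewrite col_g // col_f //; lia.
Qed.

Lemma product_coloring_range z : 0 < z <= p * a + b -> 0 < F z <= n + k.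
Proof.
move/product_coloring_parts => [g_z f_z _].
by rewrite /product_coloring; case: ifP; lia.
Qed.

Lemma product_coloring_eq X Y : 0 < X <= p * a + b -> 0 < Y <= p * a + b -> F X = F Y ->
  g (bmod a b X) = g (bmod a b Y) /\
  (g (bmod a b X) = n -> f (bdiv a b X).+1 = f (bdiv a b Y).+1).
Proof.
move=> /product_coloring_parts[gX fX _] /product_coloring_parts[gY fY _].
rewrite /product_coloring.
by case: (ltnP (g (bmod a b X)) n); case: (ltnP (g (bmod a b Y)) n); lia.
Qed.

Lemma product_coloring_carry X Y Z d :
  0 < X <= p * a + b -> 0 < Y <= p * a + b -> 0 < Z <= p * a + b ->
  X + Y = Z + a * d -> (Z <= b -> d = 0) -> X <> Y \/ b < X /\ b < Y ->
  F X = F Y -> F Z = F X ->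
  [/\ g (bmod a b X) = n, f (bdiv a b X).+1 = f (bdiv a b Y).+1,
      f (bdiv a b Z).+1 = f (bdiv a b X).+1 & bdiv a b Z + d = (bdiv a b X + bdiv a b Y).+1].
Proof.
move=> X_range Y_range Z_range sum_eq d0 ne_XY F_XY F_ZX.
have [g_XY f_XY] := product_coloring_eq X_range Y_range F_XY.
have [g_ZX f_ZX] := product_coloring_eq Z_range X_range F_ZX.
have [g_n carry] := WS_template_carry gWS (proj1 (andP X_range)) (proj1 (andP Y_range))
  (proj1 (andP Z_range)) sum_eq d0 ne_XY g_XY g_ZX.
by split=> //; [exact: f_XY | apply: f_ZX; rewrite g_ZX].
Qed.

Lemma product_coloring_sum_free x y :
  0 < x <= p * a + b -> 0 < y <= p * a + b -> x <> y \/ b < x /\ b < y ->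
  F x = F y -> x + y <= p * a + b -> F (x + y) <> F x.
Proof.
move=> x_range y_range ne_xy F_xy sum_le F_sum.
have sum_range : 0 < x + y <= p * a + b by lia.
have sum_eq : x + y = x + y + a * 0 by rewrite muln0 addn0.
have [_ f_xy f_sum carry] :=
  product_coloring_carry x_range y_range sum_range sum_eq (fun _ => erefl) ne_xy F_xy F_sum.
have [_ _ lt_px] := product_coloring_parts x_range.
have [_ _ lt_py] := product_coloring_parts y_range.
have [_ _ lt_ps] := product_coloring_parts sum_range.
have [_ f_sum_free _] := fS.
apply: (f_sum_free (bdiv a b x).+1 (bdiv a b y).+1) => //; try lia.
by rewrite -f_sum; congr f; lia.
Qed.

Lemma product_coloring_top x y :
  0 < x <= p * a + b -> 0 < y <= p * a + b -> F x = n + k -> F y = n + k ->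
  b + 2 * (p * a) < x + y -> F (x + y - 2 * (p * a)) <> n + k.
Proof.
move=> x_range y_range F_x F_y lt_sum F_Z.
have [[_ _ _ b_lt_a _] _] := gWS.
have le_a_pa : a <= p * a by rewrite leq_pmull.
set Z := x + y - 2 * (p * a) in F_Z *.
have Z_range : 0 < Z <= p * a + b by lia.
have sum_eq : x + y = Z + a * (2 * p) by lia.
have d0 : Z <= b -> 2 * p = 0 by lia.
have ne_xy : x <> y \/ b < x /\ b < y by lia.
have [_ _ _ carry] := product_coloring_carry x_range y_range Z_range sum_eq d0 ne_xy
  (etrans F_x (esym F_y)) (etrans F_Z (esym F_x)).
have [_ _ lt_px] := product_coloring_parts x_range.
have [_ _ lt_py] := product_coloring_parts y_range.
lia.
Qed.

Lemma product_coloring_modular x y :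
  0 < x <= p * a + b -> 0 < y <= p * a + b -> F x = F y -> F x < n + k ->
  p * a + b < x + y -> F (piab (p * a) b (x + y)) <> F x.
Proof.
move=> x_range y_range F_xy lt_Fx lt_sum F_Z.
have [[_ _ n_gt0 b_lt_a _] _] := gWS; have [_ _ f_mod] := fS.
have lt_b_pa : b < p * a by apply: leq_trans b_lt_a _; rewrite leq_pmull.
have lt_b_sum : b < x + y by lia.
have [t sum_div] := piab_divn_eq lt_b_pa lt_b_sum.
have Z_gtb := piab_range lt_b_pa (x + y).
set Z := piab (p * a) b (x + y) in F_Z sum_div Z_gtb *.
have Z_range : 0 < Z <= p * a + b by lia.
have sum_eq : x + y = Z + a * (p * t) by lia.
have d0 : Z <= b -> p * t = 0 by lia.
have ne_xy : x <> y \/ b < x /\ b < y by case: (eqVneq x y) => [|/eqP]; lia.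
have [g_n f_xy f_Zx carry] :=
  product_coloring_carry x_range y_range Z_range sum_eq d0 ne_xy F_xy F_Z.
have [_ _ lt_px] := product_coloring_parts x_range.
have [_ _ lt_py] := product_coloring_parts y_range.
have t_eq1 : t = 1 by case: t => [|[|t]] in sum_div sum_eq d0 carry *; lia.
rewrite t_eq1 muln1 in carry.
apply: (f_mod (bdiv a b x).+1 (bdiv a b y).+1) => //; try lia.
  by move: lt_Fx; rewrite /product_coloring g_n ltnn; lia.
by rewrite -f_Zx; congr f; lia.
Qed.

Lemma product_template : WS_template b (n + k) (p * a) F.
Proof.
have [[a_gt0 b_gt0 n_gt0 b_lt_a _] _] := gWS.
have le_a_pa : a <= p * a by rewrite leq_pmull.
split; first by split; [lia | lia | lia | lia | exact: product_coloring_range].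
split.
- move=> x y x_range y_range ne_xy.
  exact: product_coloring_sum_free x_range y_range (or_introl ne_xy).
- move=> x y /andP[lt_bx x_le] /andP[lt_by y_le].
  by apply: product_coloring_sum_free; [lia | lia | right].
- exact: product_coloring_top.
- exact: product_coloring_modular.
Qed.

End ProductTemplate.

Lemma WS_template_width_bound b m a g : WS_template b m a g -> a <= m * wschur_bound m m.
Proof.
move=> [[_ _ _ _ col_g] [g_i _ _ _]].
by have := weakly_sum_free_bound col_g g_i; lia.
Qed.

Lemma WS_plus_b_ge b m a g : WS_template b m a g -> a <= WS_plus_b b m.
Proof.
move=> gWS; apply: (greatest_ge (B := m * wschur_bound m m)); first by exists g.
by move=> a' [g' /WS_template_width_bound].
Qed.

Lemma WS_plus_b_witness b m : 0 < WS_plus_b b m -> exists g, WS_template b m (WS_plus_b b m) g.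
Proof. exact: greatest_holds. Qed.

Lemma WS_plus_b_le_WS_plus m b : 0 < b -> WS_plus_b b m <= WS_plus m.
Proof.
move=> b_gt0; apply: (greatest_ge (B := m * wschur_bound m m)); first by exists b.
move=> _ [b' _ ->]; have [->//|/WS_plus_b_witness[g]] := posnP (WS_plus_b b' m).
exact: WS_template_width_bound.
Qed.

Lemma WS_plus_witness m : 0 < WS_plus m ->
  exists b g, 0 < b /\ WS_template b m (WS_plus m) g.
Proof.
move=> a_gt0; have [b b_gt0 a_eq] := greatest_holds a_gt0.
rewrite -/(WS_plus m) in a_eq; rewrite a_eq in a_gt0 *; have [g gWS] := WS_plus_b_witness a_gt0.
by exists b, g.
Qed.

Lemma S_plus_witness m : 0 < S_plus m -> exists f, S_template m (S_plus m) f.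
Proof. exact: greatest_holds. Qed.

Theorem corollary3p22 (n k : nat) :
  0 < n -> 0 < k -> S_plus (k + 1) * WS_plus n <= WS_plus (n + k).
Proof.
move=> _ _.
have [->//|p_gt0] := posnP (S_plus (k + 1)).
have [->|a_gt0] := posnP (WS_plus n); first by rewrite muln0.
have [f fS] := S_plus_witness p_gt0.
have [b [g [b_gt0 gWS]]] := WS_plus_witness a_gt0.
apply: leq_trans (WS_plus_b_le_WS_plus (n + k) b_gt0).
exact: WS_plus_b_ge (product_template gWS fS p_gt0).
Qed.
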